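(* Let $q'>0$, $e'=0$, $q_{\max}>0$, $\mathcal D''_3=\{\omega:0\le\omega\le\pi/2\}$, $\mathcal D_4=\{(q,e):0<q\le q_{\max},\ 0\le e\le1\}$. For each $(q,e)\in\mathcal D_4$, $$\min_{\omega\in\mathcal D''_3}\delta_{\rm nod}=\max\{0,\ q'-Q,\ q-q'\},\qquad \max_{\omega\in\mathcal D''_3}\delta_{\rm nod}=\max\big\{\min\{q'-q,\ Q-q'\},\ |q'-q(1+e)|\big\},$$ where $Q=\frac{q(1+e)}{1-e}$ (possibly $+\infty$).
   Context: Here the trajectory $\mathcal A'$ is a circle of radius $q'$ ($e'=0$), so $r'_+=r'_-=q'$. For $q>0$, $e\in[0,1]$, $\omega$ an angle, define $r_{\pm}=\frac{q(1+e)}{1\pm e\cos\omega}$ (extended-real value $+\infty$ when the denominator vanishes), $d^\pm=q'-r_\pm$, and the nodal distance $\delta_{\rm nod}(q,e,\omega)=\min\{|d^+|,|d^-|\}$. *)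

From Stdlib Require Import Reals Lra.
Open Scope R_scope.

Inductive ER : Type := Fin (x : R) | PInf | NInf.

Definition ER_le (a b : ER) : Prop :=
  match a, b with
  | Fin x, Fin y => x <= y
  | NInf, _ => True
  | _, PInf => True
  | _, _ => False
  end.

Definition ER_min (a b : ER) : ER :=
  match a, b with
  | Fin x, Fin y => Fin (Rmin x y)
  | NInf, _ => NInf
  | _, NInf => NInf
  | PInf, b => b
  | a, PInf => a
  end.

Definition ER_max (a b : ER) : ER :=
  match a, b with
  | Fin x, Fin y => Fin (Rmax x y)
  | PInf, _ => PInf
  | _, PInf => PInf
  | NInf, b => b
  | a, NInf => a
  end.

Definition ER_abs (a : ER) : ER :=
  match a with Fin x => Fin (Rabs x) | _ => PInf end.

Definition ER_sub_RE (x : R) (y : ER) : ER :=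
  match y with Fin z => Fin (x - z) | PInf => NInf | NInf => PInf end.

Definition ER_sub_ER (y : ER) (x : R) : ER :=
  match y with Fin z => Fin (z - x) | PInf => PInf | NInf => NInf end.

(* num / den, with value +infinity when the denominator vanishes
   (in our uses the numerator q(1+e) is positive). *)
Definition rdiv_ext (num den : R) : ER :=
  if Req_EM_T den 0 then PInf else Fin (num / den).

Definition r_plus (q e w : R) : ER := rdiv_ext (q * (1 + e)) (1 + e * cos w).
Definition r_minus (q e w : R) : ER := rdiv_ext (q * (1 + e)) (1 - e * cos w).

(* nodal distance to the circle of radius q' *)
Definition delta_nod (q' q e w : R) : ER :=
  ER_min (ER_abs (ER_sub_RE q' (r_plus q e w)))
         (ER_abs (ER_sub_RE q' (r_minus q e w))).

Definition Qapo (q e : R) : ER := rdiv_ext (q * (1 + e)) (1 - e).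

Definition is_min_on (P : R -> Prop) (f : R -> ER) (m : ER) : Prop :=
  (exists w, P w /\ f w = m) /\ (forall w, P w -> ER_le m (f w)).

Definition is_max_on (P : R -> Prop) (f : R -> ER) (m : ER) : Prop :=
  (exists w, P w /\ f w = m) /\ (forall w, P w -> ER_le (f w) m).

(* As w runs over [0, PI/2], t = e cos w runs over [0, e], so the two nodal
   radii r+ = q(1+e)/(1+t) and r- = q(1+e)/(1-t) sweep [q, q(1+e)] and
   [q(1+e), Q] respectively, meeting at w = PI/2 and reaching the ends q and
   Q at w = 0.  Hence the minimal nodal distance is the distance from q' to
   the interval [q, Q], and the maximal one is attained at w = 0 or
   w = PI/2, where it equals min (q' - q) (Q - q') or |q' - q(1+e)|.
   Working in the extended reals treats Q = +oo (e = 1) uniformly. *)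
(* Imported before Defs, since Psatz exports Field_theory.rdiv_ext. *)
From Stdlib Require Import Reals Lra Psatz.
From Pilot Require Import Defs.
Open Scope R_scope.

Ltac solve_min_max_abs :=
  unfold Rmin, Rmax, Rabs in *;
  repeat match goal with
  | |- context [Rle_dec ?a ?b] => destruct (Rle_dec a b)
  | |- context [Rcase_abs ?a] => destruct (Rcase_abs a)
  | H : context [Rle_dec ?a ?b] |- _ => destruct (Rle_dec a b)
  | H : context [Rcase_abs ?a] |- _ => destruct (Rcase_abs a)
  end; lra.

Lemma ER_le_trans (a b c : ER) : ER_le a b -> ER_le b c -> ER_le a c.
Proof. destruct a, b, c; simpl; intros; try tauto; lra. Qed.

Lemma ER_le_antisym (a b : ER) : ER_le a b -> ER_le b a -> a = b.
Proof. destruct a, b; simpl; intros; try reflexivity; try tauto; f_equal; lra. Qed.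

Lemma ER_min_glb (a b c : ER) : ER_le c a -> ER_le c b -> ER_le c (ER_min a b).
Proof. destruct a, b, c; simpl; intros; try tauto; apply Rmin_glb; assumption. Qed.

Lemma ER_min_lel (a b : ER) : ER_le (ER_min a b) a.
Proof. destruct a, b; simpl; try tauto; try apply Rmin_l; lra. Qed.

Lemma ER_min_ler (a b : ER) : ER_le (ER_min a b) b.
Proof. destruct a, b; simpl; try tauto; try apply Rmin_r; lra. Qed.

Lemma ER_max_gel (a b : ER) : ER_le a (ER_max a b).
Proof. destruct a, b; simpl; try tauto; try apply Rmax_l; lra. Qed.

Lemma is_min_on_intro (P : R -> Prop) (f : R -> ER) (m : ER) :
  (forall w, P w -> ER_le m (f w)) -> (exists w, P w /\ ER_le (f w) m) ->
  is_min_on P f m.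
Proof.
  intros Hlow [w [Hw Hle]]. split; [|exact Hlow].
  exists w. split; [exact Hw|]. apply ER_le_antisym; auto.
Qed.

Lemma is_max_on_intro (P : R -> Prop) (f : R -> ER) (M : ER) :
  (forall w, P w -> ER_le (f w) M) -> (exists w, P w /\ ER_le M (f w)) ->
  is_max_on P f M.
Proof.
  intros Hup [w [Hw Hle]]. split; [|exact Hup].
  exists w. split; [exact Hw|]. apply ER_le_antisym; auto.
Qed.

Lemma ER_abs_sub_RE_diag (x : R) : ER_abs (ER_sub_RE x (Fin x)) = Fin 0.
Proof. simpl. rewrite Rminus_diag, Rabs_R0. reflexivity. Qed.

(* The left-hand side is the distance from x to the interval [lo, hi]. *)
Lemma ER_dist_interval_le_abs_sub (x lo : R) (hi r : ER) :
  ER_le (Fin lo) r -> ER_le r hi ->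
  ER_le (ER_max (Fin 0) (ER_max (ER_sub_RE x hi) (Fin (lo - x))))
        (ER_abs (ER_sub_RE x r)).
Proof. destruct r, hi; simpl; intros; try tauto; solve_min_max_abs. Qed.

Lemma ER_min_abs_sub_le (c lo mid : R) (r1 r2 hi : ER) :
  ER_le (Fin lo) r1 -> ER_le r1 (Fin mid) -> ER_le (Fin mid) r2 -> ER_le r2 hi ->
  ER_le (ER_min (ER_abs (ER_sub_RE c r1)) (ER_abs (ER_sub_RE c r2)))
        (ER_max (ER_min (Fin (c - lo)) (ER_sub_ER hi c)) (ER_abs (Fin (c - mid)))).
Proof. destruct r1, r2, hi; simpl; intros; try tauto; solve_min_max_abs. Qed.

(* The right-hand sides here and in the next lemma are the nodal distances
   at w = 0 and w = PI / 2 (see delta_nod_0 and delta_nod_PI2). *)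
Lemma ER_min_end_value (c lo : R) (hi : ER) :
  (lo <= c /\ ER_le (Fin c) hi) \/
  ER_le (ER_min (Fin (Rabs (c - lo))) (ER_abs (ER_sub_RE c hi)))
        (ER_max (Fin 0) (ER_max (ER_sub_RE c hi) (Fin (lo - c)))).
Proof.
  destruct hi as [h| |]; simpl.
  - destruct (Rle_lt_dec lo c), (Rle_lt_dec c h);
      [left; split; assumption | right; solve_min_max_abs ..].
  - destruct (Rle_lt_dec lo c); [left; split; auto | right; solve_min_max_abs].
  - right; trivial.
Qed.

Lemma ER_max_end_values (c lo mid : R) (hi : ER) :
  ER_le (ER_max (ER_min (Fin (c - lo)) (ER_sub_ER hi c)) (ER_abs (Fin (c - mid))))
        (Fin (Rabs (c - mid))) \/
  ER_le (ER_max (ER_min (Fin (c - lo)) (ER_sub_ER hi c)) (ER_abs (Fin (c - mid))))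
        (ER_min (Fin (Rabs (c - lo))) (ER_abs (ER_sub_RE c hi))).
Proof.
  destruct hi as [h| |]; simpl.
  - destruct (Rle_lt_dec (Rmin (c - lo) (h - c)) (Rabs (c - mid)));
      [left | right]; solve_min_max_abs.
  - destruct (Rle_lt_dec (c - lo) (Rabs (c - mid))); [left | right]; solve_min_max_abs.
  - left; lra.
Qed.

Lemma rdiv_ext_nonzero (num den : R) : den <> 0 -> rdiv_ext num den = Fin (num / den).
Proof. intros Hden. unfold rdiv_ext. destruct (Req_EM_T den 0); [contradiction | reflexivity]. Qed.

Lemma rdiv_ext_antitone (num d1 d2 : R) :
  0 <= num -> 0 <= d2 <= d1 -> ER_le (rdiv_ext num d1) (rdiv_ext num d2).
Proof.
  intros Hnum Hd. unfold rdiv_ext.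
  destruct (Req_EM_T d1 0), (Req_EM_T d2 0); simpl; trivial; [lra|].
  apply Rmult_le_compat_l; [exact Hnum|]. apply Rinv_le_contravar; lra.
Qed.

Lemma cos_onto_quarter (c : R) : 0 <= c <= 1 -> exists w, 0 <= w <= PI / 2 /\ cos w = c.
Proof.
  intros Hc. exists (acos c). pose proof (acos_bound c). pose proof PI_RGT_0.
  assert (Hcos : cos (acos c) = c) by (apply cos_acos; lra).
  split; [|exact Hcos]. split; [lra|].
  destruct (Rle_dec (acos c) (PI / 2)) as [Hle|Hgt]; [exact Hle|].
  assert (cos (acos c) < 0) by (apply cos_lt_0; lra). lra.
Qed.

Lemma scaled_cos_onto_quarter (e t : R) :
  0 <= t <= e -> exists w, 0 <= w <= PI / 2 /\ e * cos w = t.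
Proof.
  intros Ht. destruct (Req_dec e 0) as [He0|He0].
  - exists 0. split; [pose proof PI_RGT_0; lra|]. subst e. lra.
  - destruct (cos_onto_quarter (t / e)) as [w [Hw Hcos]].
    + split; [apply Rle_mult_inv_pos | apply Rmult_le_reg_r with e;
        [|unfold Rdiv; rewrite Rmult_assoc, Rinv_l]]; lra.
    + exists w. split; [exact Hw|]. rewrite Hcos. field. exact He0.
Qed.

Section NodalDistance.

Variables q' q e : R.
Hypothesis q_gt0 : 0 < q.
Hypothesis e_bounds : 0 <= e <= 1.

Lemma nodal_radii_chain (w : R) : 0 <= w <= PI / 2 ->
  ER_le (Fin q) (r_plus q e w) /\ ER_le (r_plus q e w) (Fin (q * (1 + e))) /\
  ER_le (Fin (q * (1 + e))) (r_minus q e w) /\ ER_le (r_minus q e w) (Qapo q e).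
Proof.
  intros Hw. pose proof PI_RGT_0.
  assert (Ht : 0 <= e * cos w <= e).
  { assert (0 <= cos w) by (apply cos_ge_0; lra). pose proof (COS_bound w). nra. }
  assert (HA : 0 <= q * (1 + e)) by nra.
  (* Each bound is num / den antitone in den along
     1 + e >= 1 + e cos w >= 1 >= 1 - e cos w >= 1 - e. *)
  replace (Fin q) with (rdiv_ext (q * (1 + e)) (1 + e))
    by (rewrite rdiv_ext_nonzero by lra; f_equal; field; lra).
  replace (Fin (q * (1 + e))) with (rdiv_ext (q * (1 + e)) 1)
    by (rewrite rdiv_ext_nonzero, Rdiv_1_r by lra; reflexivity).
  unfold r_plus, r_minus, Qapo.
  repeat split; apply rdiv_ext_antitone; lra.
Qed.

Lemma r_plus_onto (x : R) : q <= x <= q * (1 + e) ->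
  exists w, 0 <= w <= PI / 2 /\ r_plus q e w = Fin x.
Proof.
  intros Hx. set (A := q * (1 + e)) in *.
  assert (HA : q <= A) by (unfold A; nra).
  set (t := (A - x) / x).
  assert (Ht : t * x = A - x) by (unfold t; field; lra).
  destruct (scaled_cos_onto_quarter e t) as [w [Hw Hcos]]; [unfold A in *; nra|].
  exists w. split; [exact Hw|].
  unfold r_plus. fold A. rewrite Hcos, rdiv_ext_nonzero by nra.
  f_equal. unfold t. field. lra.
Qed.

Lemma mul_one_sub_le_of_le_Qapo (y : R) : ER_le (Fin y) (Qapo q e) -> y * (1 - e) <= q * (1 + e).
Proof.
  unfold Qapo, rdiv_ext. destruct (Req_EM_T (1 - e) 0) as [He1|He1]; simpl; intros Hy.
  - rewrite He1. nra.
  - apply Rmult_le_reg_r with (/ (1 - e)); [apply Rinv_0_lt_compat; lra|].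
    rewrite Rmult_assoc, Rinv_r by exact He1. lra.
Qed.

Lemma r_minus_onto (y : R) : q * (1 + e) <= y -> ER_le (Fin y) (Qapo q e) ->
  exists w, 0 <= w <= PI / 2 /\ r_minus q e w = Fin y.
Proof.
  intros Hy HyQ. pose proof (mul_one_sub_le_of_le_Qapo y HyQ) as Hy1. set (A := q * (1 + e)) in *.
  assert (HA : 0 < A) by (unfold A; nra).
  set (t := (y - A) / y).
  assert (Ht : t * y = y - A) by (unfold t; field; lra).
  destruct (scaled_cos_onto_quarter e t) as [w [Hw Hcos]]; [nra|].
  exists w. split; [exact Hw|].
  unfold r_minus. fold A. rewrite Hcos, rdiv_ext_nonzero by nra.
  f_equal. unfold t. field. lra.
Qed.

Lemma delta_nod_vanishes : q <= q' -> ER_le (Fin q') (Qapo q e) ->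
  exists w, 0 <= w <= PI / 2 /\ ER_le (delta_nod q' q e w) (Fin 0).
Proof.
  intros Hq HQ. rewrite <- (ER_abs_sub_RE_diag q'). unfold delta_nod.
  destruct (Rle_lt_dec q' (q * (1 + e))) as [Hle|Hgt].
  - destruct (r_plus_onto q') as [w [Hw Hr]]; [lra|].
    exists w. split; [exact Hw|]. rewrite Hr. apply ER_min_lel.
  - destruct (r_minus_onto q') as [w [Hw Hr]]; [lra | exact HQ|].
    exists w. split; [exact Hw|]. rewrite Hr. apply ER_min_ler.
Qed.

Lemma delta_nod_0 :
  delta_nod q' q e 0 = ER_min (Fin (Rabs (q' - q))) (ER_abs (ER_sub_RE q' (Qapo q e))).
Proof.
  unfold delta_nod, r_plus, r_minus, Qapo. rewrite cos_0, Rmult_1_r.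
  rewrite rdiv_ext_nonzero by lra.
  replace (q * (1 + e) / (1 + e)) with q by (field; lra). reflexivity.
Qed.

Lemma delta_nod_PI2 : delta_nod q' q e (PI / 2) = Fin (Rabs (q' - q * (1 + e))).
Proof.
  unfold delta_nod, r_plus, r_minus.
  rewrite cos_PI2, Rmult_0_r, Rplus_0_r, Rminus_0_r, rdiv_ext_nonzero, Rdiv_1_r by lra.
  simpl. unfold Rmin. destruct (Rle_dec _ _); reflexivity.
Qed.

Lemma delta_nod_min :
  is_min_on (fun w => 0 <= w <= PI / 2) (delta_nod q' q e)
    (ER_max (Fin 0) (ER_max (ER_sub_RE q' (Qapo q e)) (Fin (q - q')))).
Proof.
  pose proof PI_RGT_0. apply is_min_on_intro.
  - intros w Hw. destruct (nodal_radii_chain w Hw) as (H1 & H2 & H3 & H4).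
    apply ER_min_glb; apply ER_dist_interval_le_abs_sub;
      eauto using ER_le_trans.
  - destruct (ER_min_end_value q' q (Qapo q e)) as [[Hq HQ] | Hend].
    + destruct (delta_nod_vanishes Hq HQ) as [w [Hw Hd]]. exists w. split; [exact Hw|].
      apply ER_le_trans with (1 := Hd). apply ER_max_gel.
    + exists 0. split; [lra|]. rewrite delta_nod_0. exact Hend.
Qed.

Lemma delta_nod_max :
  is_max_on (fun w => 0 <= w <= PI / 2) (delta_nod q' q e)
    (ER_max (ER_min (Fin (q' - q)) (ER_sub_ER (Qapo q e) q'))
            (ER_abs (Fin (q' - q * (1 + e))))).
Proof.
  pose proof PI_RGT_0. apply is_max_on_intro.
  - intros w Hw. destruct (nodal_radii_chain w Hw) as (H1 & H2 & H3 & H4).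
    apply ER_min_abs_sub_le; assumption.
  - destruct (ER_max_end_values q' q (q * (1 + e)) (Qapo q e)) as [Hend | Hend].
    + exists (PI / 2). split; [lra|]. rewrite delta_nod_PI2. exact Hend.
    + exists 0. split; [lra|]. rewrite delta_nod_0. exact Hend.
Qed.

End NodalDistance.

Theorem proposition10 (q' qmax q e : R) :
  0 < q' -> 0 < qmax -> 0 < q <= qmax -> 0 <= e <= 1 ->
  is_min_on (fun w => 0 <= w <= PI / 2) (delta_nod q' q e)
    (ER_max (Fin 0) (ER_max (ER_sub_RE q' (Qapo q e)) (Fin (q - q'))))
  /\
  is_max_on (fun w => 0 <= w <= PI / 2) (delta_nod q' q e)
    (ER_max (ER_min (Fin (q' - q)) (ER_sub_ER (Qapo q e) q'))
            (ER_abs (Fin (q' - q * (1 + e))))).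
Proof.
  intros _ _ [Hq _] He.
  split; [apply delta_nod_min | apply delta_nod_max]; assumption.
Qed.
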